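(* Assume the standing assumptions in the context. There exists at most one bounded constrained viscosity solution $v=(v_1,v_2)$ on $[\underline{x},+\infty)$ of the system $$\rho v_j(x)=H(x,y_j,Dv_j(x))+\lambda_j\big(v_{\bar\jmath}(x)-v_j(x)\big),\qquad j=1,2,\ \bar\jmath=3-j.$$
   Context: Standing assumptions: $\rho>0$; $-\infty<r<\rho$; $0<y_1<y_2$; $\gamma>1$; $\underline{x}\le0$ with $\rho\underline{x}+y_j>0$ for $j=1,2$; $\lambda_1,\lambda_2\ge0$ constants. Utility $u(c)=\frac{c^{1-\gamma}}{1-\gamma}$; Hamiltonian $H(x,y_j,p)=\sup_{c\ge0}\{u(c)+(rx+y_j-c)p\}$, equal to $(rx+y_j)p+\frac{\gamma}{1-\gamma}p^{1-1/\gamma}$ for $p\ge0$ and $+\infty$ for $p<0$. Viscosity subsolution on $S\subseteq[\underline{x},\infty)$: u.s.c. pair $v$ such that whenever $\varphi$ smooth, $j\in\{1,2\}$, and $v_j-\varphi$ has a local max (relative to $[\underline{x},\infty)$) at $x_0\in S$, then $\rho v_j(x_0)\le H(x_0,y_j,D\varphi(x_0))+\lambda_j(v_{\bar\jmath}(x_0)-v_j(x_0))$. Viscosity supersolution on $S$: l.s.c. pair with the reverse inequality at local minima $x_0\in S$. A constrained viscosity solution is a continuous pair that is a viscosity supersolution on $(\underline{x},\infty)$ and a viscosity subsolution on $[\underline{x},\infty)$. *)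

From Stdlib Require Import Reals.
From Coquelicot Require Import Coquelicot.
Open Scope R_scope.

(* CRRA utility u(c) = c^(1-gamma)/(1-gamma), for c > 0.  Since gamma > 1,
   u(0) = -infinity, so c = 0 never contributes to the supremum below. *)
Definition util (gamma c : R) : R := Rpower c (1 - gamma) / (1 - gamma).

Definition Ham (r gamma x y p : R) : Rbar :=
  Lub_Rbar (fun z => exists c, 0 < c /\ z = util gamma c + (r * x + y - c) * p).

Definition smooth (phi : R -> R) : Prop :=
  forall (n : nat) (x : R), ex_derive (Derive_n phi n) x.

Definition loc_max_rel (xl : R) (f : R -> R) (x0 : R) : Prop :=
  exists d, 0 < d /\ forall x, xl <= x -> Rabs (x - x0) < d -> f x <= f x0.
Definition loc_min_rel (xl : R) (f : R -> R) (x0 : R) : Prop :=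
  exists d, 0 < d /\ forall x, xl <= x -> Rabs (x - x0) < d -> f x0 <= f x.

(* j : bool encodes the regime: true = 1, false = 2;  negb j = \bar j *)
Definition ysel (y1 y2 : R) (j : bool) : R := if j then y1 else y2.
Definition lsel (l1 l2 : R) (j : bool) : R := if j then l1 else l2.

Definition usc_on (xl : R) (f : R -> R) : Prop :=
  forall x0, xl <= x0 -> forall eps, 0 < eps ->
    exists d, 0 < d /\ forall x, xl <= x -> Rabs (x - x0) < d -> f x < f x0 + eps.
Definition lsc_on (xl : R) (f : R -> R) : Prop :=
  forall x0, xl <= x0 -> forall eps, 0 < eps ->
    exists d, 0 < d /\ forall x, xl <= x -> Rabs (x - x0) < d -> f x0 - eps < f x.

Definition visc_sub (rho r gamma y1 y2 l1 l2 xl : R) (S : R -> Prop)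
  (v : bool -> R -> R) : Prop :=
  (forall j, usc_on xl (v j)) /\
  forall (phi : R -> R) (j : bool) (x0 : R),
    smooth phi -> S x0 -> loc_max_rel xl (fun x => v j x - phi x) x0 ->
    Rbar_le (Finite (rho * v j x0))
      (Rbar_plus (Ham r gamma x0 (ysel y1 y2 j) (Derive phi x0))
                 (Finite (lsel l1 l2 j * (v (negb j) x0 - v j x0)))).

Definition visc_super (rho r gamma y1 y2 l1 l2 xl : R) (S : R -> Prop)
  (v : bool -> R -> R) : Prop :=
  (forall j, lsc_on xl (v j)) /\
  forall (phi : R -> R) (j : bool) (x0 : R),
    smooth phi -> S x0 -> loc_min_rel xl (fun x => v j x - phi x) x0 ->
    Rbar_le (Rbar_plus (Ham r gamma x0 (ysel y1 y2 j) (Derive phi x0))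
                       (Finite (lsel l1 l2 j * (v (negb j) x0 - v j x0))))
            (Finite (rho * v j x0)).

Definition cont_on (xl : R) (f : R -> R) : Prop :=
  forall x0, xl <= x0 -> forall eps, 0 < eps ->
    exists d, 0 < d /\ forall x, xl <= x -> Rabs (x - x0) < d -> Rabs (f x - f x0) < eps.

Definition constrained_visc_sol (rho r gamma y1 y2 l1 l2 xl : R)
  (v : bool -> R -> R) : Prop :=
  (forall j, cont_on xl (v j)) /\
  visc_super rho r gamma y1 y2 l1 l2 xl (fun x => xl < x) v /\
  visc_sub rho r gamma y1 y2 l1 l2 xl (fun x => xl <= x) v.

Definition bounded_on (xl : R) (v : bool -> R -> R) : Prop :=
  exists M, forall j x, xl <= x -> Rabs (v j x) <= M.

(* Comparison by doubling the variables with an inward shift.  For a bounded continuous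
   subsolution u on [a, oo) and supersolution w on (a, oo), maximize over the regime j, x >= a
   and t > 0 the function  u_j(x) - w_j(x + t) + eps ln t - t / del - bet (2 (x - a) + t).
   At a maximum the point x + t lies in (a, oo), where the supersolution inequality holds, while
   the subsolution inequality is available up to the boundary: this is how the state constraint
   enters.  The two test slopes differ by 2 bet >= 0 and H(x, y, p) - (r x + y) p is
   nonincreasing in p, so the Hamiltonians compare up to drift terms of order eps + bet; the
   switching terms have the right sign because the maximum is also taken over j.  Letting
   eps, bet -> 0 gives u <= w, and uniqueness follows by symmetry. *)

From Stdlib Require Import Reals Lra Psatz.
From Coquelicot Require Import Coquelicot.
From mathcomp Require ssreflect ssrfun ssrbool ssralg ssrnum interval.
From mathcomp Require boolp classical_sets topology normedtype derive.
From mathcomp Require Rstruct Rstruct_topology.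
Open Scope R_scope.

(* MathComp-Analysis is imported only inside this module: its [ball], [continuous] and
   [is_derive] would shadow Coquelicot's. *)
Module RectangleMax.
Import ssreflect ssrfun ssrbool ssralg ssrnum interval.
Import boolp classical_sets topology normedtype derive Rstruct Rstruct_topology.
Local Open Scope classical_set_scope.

Lemma continuous_argmax_rectangle (f : R -> R -> R) a1 b1 a2 b2 :
  a1 <= b1 -> a2 <= b2 ->
  (forall x y, a1 <= x <= b1 -> a2 <= y <= b2 -> forall e, 0 < e -> exists d, 0 < d /\
     forall x' y', a1 <= x' <= b1 -> a2 <= y' <= b2 -> Rabs (x' - x) < d -> Rabs (y' - y) < d ->
       Rabs (f x' y' - f x y) < e) ->
  exists xm ym, a1 <= xm <= b1 /\ a2 <= ym <= b2 /\
    forall x y, a1 <= x <= b1 -> a2 <= y <= b2 -> f x y <= f xm ym.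
Proof.
move=> le_ab1 le_ab2 cf.
pose A : set (R * R) := `[a1, b1] `*` `[a2, b2].
have inA p : A p <-> a1 <= p.1 <= b1 /\ a2 <= p.2 <= b2.
  rewrite /A /= !in_itv /=; split.
    by case=> /andP[/RleP ? /RleP ?] /andP[/RleP ? /RleP ?].
  by case=> [[/RleP -> /RleP ->] [/RleP -> /RleP ->]].
have A0 : A !=set0 by exists (a1, a2); apply/inA; simpl; lra.
have cA : compact A by apply: compact_setX; apply: segment_compact.
have cfA : {within A, continuous (fun p => f p.1 p.2)}.
  apply/subspace_continuousP => p /inA [Hp1 Hp2].
  apply/cvg_ballP => e /RltP e0.
  have [d [d0 hd]] := cf p.1 p.2 Hp1 Hp2 e e0.
  rewrite near_withinE /= near_simpl.
  apply/nbhs_ballP; exists d; first exact/RltP.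
  case=> x y [/= bx b_y] /inA [/= Hx Hy].
  rewrite /ball /= -!RabsE in bx b_y *.
  apply/RltP; rewrite Rabs_minus_sym; apply: hd => //.
    by rewrite Rabs_minus_sym; apply/RltP.
  by rewrite Rabs_minus_sym; apply/RltP.
have [[xm ym] /set_mem /inA [Hxm Hym] hmax] := compact_EVT_max A0 cA cfA.
exists xm, ym; split; [exact: Hxm | split; [exact: Hym |]].
move=> x y Hx Hy; apply/RleP; apply: (hmax (x, y)); apply/mem_set/inA; split; assumption.
Qed.

End RectangleMax.
Import RectangleMax.

Lemma at_right_0_exists_pos (P : R -> Prop) : at_right 0 P -> exists d, 0 < d /\ P d.
Proof.
  intro HP.
  assert (Hpos : at_right 0 (fun d => 0 < d)) by (exists (mkposreal 1 Rlt_0_1); auto).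
  exact (filter_ex _ (filter_and _ _ Hpos HP)).
Qed.

Lemma at_right_0_mul_le (c k : R) : 0 < k -> at_right 0 (fun d => d * c <= k).
Proof.
  intro Hk.
  assert (Habs : 0 <= Rabs c) by apply Rabs_pos.
  assert (Hd : 0 < k / (Rabs c + 1)) by (apply Rdiv_lt_0_compat; lra).
  exists (mkposreal _ Hd). intros d Hball Hdpos. simpl in Hball.
  apply Rabs_lt_between' in Hball.
  apply Rle_trans with (d * Rabs c); [apply Rmult_le_compat_l; [lra | apply Rle_abs] |].
  apply Rle_trans with (k / (Rabs c + 1) * (Rabs c + 1)); [nra |].
  right; field; lra.
Qed.

Lemma argmax_bool (P : R -> R -> Prop) (f : bool -> R -> R -> R) :
  (forall j, exists x t, P x t /\ forall x' t', P x' t' -> f j x' t' <= f j x t) ->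
  exists j x t, P x t /\ forall j' x' t', P x' t' -> f j' x' t' <= f j x t.
Proof.
  intro Hmax.
  destruct (Hmax true) as [xT [tT [HT MT]]], (Hmax false) as [xF [tF [HF MF]]].
  destruct (Rle_dec (f false xF tF) (f true xT tT)).
  - exists true, xT, tT. split; [exact HT |].
    intros [|] x' t' H'; [apply MT, H' | specialize (MF x' t' H'); lra].
  - exists false, xF, tF. split; [exact HF |].
    intros [|] x' t' H'; [specialize (MT x' t' H'); lra | apply MF, H'].
Qed.

Definition parabola (B C x0 x : R) : R := B * (x - x0) + C * ((x - x0) * (x - x0)).

Lemma Derive_parabola B C x0 x : Derive (parabola B C x0) x = B + 2 * C * (x - x0).
Proof. apply is_derive_unique. unfold parabola. auto_derive; [exact I | ring]. Qed.

Lemma Derive_n_parabola B C x0 n x :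
  Derive_n (parabola B C x0) (S (S n)) x = match n with O => 2 * C | _ => 0 end.
Proof.
  revert x; induction n as [|n IHn]; intro x.
  - simpl. rewrite (Derive_ext _ (fun x => B + 2 * C * (x - x0)) _ (Derive_parabola B C x0)).
    apply is_derive_unique. auto_derive; [exact I | ring].
  - change (Derive (Derive_n (parabola B C x0) (S (S n))) x = 0).
    rewrite (Derive_ext _ _ _ IHn). apply Derive_const.
Qed.

Lemma smooth_parabola B C x0 : smooth (parabola B C x0).
Proof.
  intros n x. destruct n as [|[|n]]; simpl.
  - unfold parabola. auto_derive. exact I.
  - apply (ex_derive_ext (fun x => B + 2 * C * (x - x0))).
    + intro t. symmetry. apply Derive_parabola.
    + auto_derive. exact I.
  - apply (ex_derive_ext (fun _ => match n with O => 2 * C | _ => 0 end)).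
    + intro t. symmetry. apply (Derive_n_parabola B C x0 n t).
    + apply ex_derive_const.
Qed.

Lemma Derive_parabola_at B C x0 : Derive (parabola B C x0) x0 = B.
Proof. rewrite Derive_parabola. ring. Qed.

Lemma ln_le_sub_1 z : 0 < z -> ln z <= z - 1.
Proof. intro Hz. generalize (exp_ineq1_le (ln z)). rewrite exp_ln; lra. Qed.

Lemma ln_shift_ge t s : 0 < t -> - (t / 2) < s ->
  s / t - 2 * (s * s) / (t * t) <= ln (t + s) - ln t.
Proof.
  intros Ht Hs.
  assert (Hts : 0 < t + s) by lra.
  assert (Hlow : 1 - t / (t + s) <= ln (t + s) - ln t).
  { assert (Hq : 0 < t / (t + s)) by (apply Rdiv_lt_0_compat; lra).
    generalize (ln_le_sub_1 _ Hq). rewrite ln_div by lra. lra. }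
  assert (Hgap : 0 <= 1 - t / (t + s) - (s / t - 2 * (s * s) / (t * t))).
  { replace (1 - t / (t + s) - (s / t - 2 * (s * s) / (t * t)))
      with (s * s * (t + 2 * s) / ((t + s) * (t * t))) by (field; lra).
    apply Rdiv_le_0_compat; [| apply Rmult_lt_0_compat; nra].
    apply Rmult_le_pos; [apply Rle_0_sqr | lra]. }
  lra.
Qed.

(* [H(x, y, p) - (r x + y) p = sup_c (u(c) - c p)] does not depend on [x] and is
   nonincreasing in [p]. *)
Lemma Ham_sub_super r g x x' y p q a la b lb :
  q <= p ->
  Rbar_le (Finite a) (Rbar_plus (Ham r g x y p) (Finite la)) ->
  Rbar_le (Rbar_plus (Ham r g x' y q) (Finite lb)) (Finite b) ->
  a - la - (r * x + y) * p <= b - lb - (r * x' + y) * q.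
Proof.
  intros Hqp Hsub Hsup.
  assert (Hsup_c : forall c, 0 < c -> util g c + (r * x' + y - c) * q + lb <= b).
  { intros c Hc. unfold Ham in Hsup.
    destruct (Lub_Rbar_correct (fun z => exists c, 0 < c /\ z = util g c + (r * x' + y - c) * q))
      as [Hub _].
    specialize (Hub _ (ex_intro _ c (conj Hc eq_refl))).
    destruct (Lub_Rbar _); simpl in *; try contradiction; lra. }
  assert (Hbound : Rbar_le (Ham r g x y p) (Finite (b - lb + (r * x + y) * p - (r * x' + y) * q))).
  { apply Lub_Rbar_correct. intros z [c [Hc ->]]. simpl.
    specialize (Hsup_c c Hc).
    assert (c * q <= c * p) by (apply Rmult_le_compat_l; lra).
    nra. }
  destruct (Ham r g x y p); simpl in *; try contradiction; lra.
Qed.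

Section Doubling.

Variables (u w : bool -> R -> R) (a eps del bet : R).
Hypotheses (Heps : 0 < eps) (Hdel : 0 < del) (Hbet : 0 < bet).

(* [eps * ln t] keeps a maximizing [t] positive, [t / del] keeps it small, and the [bet]
   term keeps a maximizing [x] bounded. *)
Definition doubling (j : bool) (x t : R) : R :=
  u j x - w j (x + t) + eps * ln t - t / del - bet * (2 * (x - a) + t).

Lemma doubling_superlevel_in_box K C :
  (forall j x t, a <= x -> 0 < t -> u j x - w j (x + t) <= K) -> eps * (2 * del) <= 1 ->
  forall j x t, a <= x -> 0 < t -> K - C <= doubling j x t ->
  x <= a + C / (2 * bet) /\ exp (- C / eps) <= t <= 2 * del * C.
Proof.
  intros HK Hed j x t Hx Ht Hlev.
  specialize (HK j x t Hx Ht).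
  assert (Hln : eps * ln t <= t / (2 * del)).
  { apply Rle_trans with (eps * t).
    - apply Rmult_le_compat_l; [lra |]. generalize (ln_le_sub_1 t Ht). lra.
    - apply Rmult_le_reg_r with (2 * del); [lra |].
      replace (t / (2 * del) * (2 * del)) with t by (field; lra). nra. }
  assert (Hlin : doubling j x t <= K - t / (2 * del) - 2 * bet * (x - a)).
  { unfold doubling. replace (t / del) with (2 * (t / (2 * del))) by (field; lra). nra. }
  assert (Hlog : doubling j x t <= K + eps * ln t).
  { unfold doubling. assert (0 <= t / del) by (apply Rdiv_le_0_compat; lra). nra. }
  assert (Ht2 : 0 <= t / (2 * del)) by (apply Rdiv_le_0_compat; lra).
  assert (Hxa : 0 <= 2 * bet * (x - a)) by nra.
  repeat split.
  - apply Rmult_le_reg_l with (2 * bet); [lra |].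
    replace (2 * bet * (a + C / (2 * bet))) with (2 * bet * a + C) by (field; lra). lra.
  - apply Rnot_lt_le. intro Hsmall.
    assert (Hlnt : ln t < - C / eps).
    { rewrite <- (ln_exp (- C / eps)). apply ln_increasing; assumption. }
    assert (eps * ln t < - C).
    { replace (- C) with (eps * (- C / eps)) by (field; lra). apply Rmult_lt_compat_l; lra. }
    lra.
  - apply Rmult_le_reg_r with (/ (2 * del)); [apply Rinv_0_lt_compat; lra |].
    replace (2 * del * C * / (2 * del)) with C by (field; lra). unfold Rdiv in *. lra.
Qed.

Section Maximum.

Hypotheses (Hcu : forall j, cont_on a (u j)) (Hcw : forall j, cont_on a (w j)).

Lemma doubling_continuous j x t : a <= x -> 0 < t -> forall e, 0 < e -> exists d, 0 < d /\
  forall x' t', a <= x' -> 0 < t' -> Rabs (x' - x) < d -> Rabs (t' - t) < d ->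
  Rabs (doubling j x' t' - doubling j x t) < e.
Proof.
  intros Hx Ht e He.
  destruct (Hcu j x Hx (e / 4)) as [d1 [Hd1 Hu]]; [lra |].
  destruct (Hcw j (x + t) ltac:(lra) (e / 4)) as [d2 [Hd2 Hw]]; [lra |].
  assert (He' : 0 < e / (4 * eps)) by (apply Rdiv_lt_0_compat; lra).
  destruct (continuous_ln t Ht (fun z => Rabs (z - ln t) < e / (4 * eps))) as [d3 Hln].
  { exists (mkposreal _ He'). auto. }
  set (L := / del + 3 * bet).
  destruct (at_right_0_exists_pos _
    (filter_and _ _ (at_right_0_mul_le 1 d1 Hd1)
    (filter_and _ _ (at_right_0_mul_le 2 d2 Hd2)
    (filter_and _ _ (at_right_0_mul_le 1 d3 (cond_pos d3))
                    (at_right_0_mul_le L (e / 4) ltac:(lra))))))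
    as [d [Hd [Hdd1 [Hdd2 [Hdd3 HdL]]]]].
  exists d. split; [exact Hd |]. intros x' t' Hx' Ht' Hdx Hdt.
  apply Rabs_lt_between' in Hdx, Hdt.
  assert (Bu : Rabs (u j x' - u j x) < e / 4) by (apply Hu; [exact Hx' | apply Rabs_def1; lra]).
  assert (Bw : Rabs (w j (x' + t') - w j (x + t)) < e / 4)
    by (apply Hw; [lra | apply Rabs_def1; lra]).
  assert (Bln : Rabs (ln t' - ln t) < e / (4 * eps)).
  { apply (Hln t'). change (Rabs (t' - t) < d3). apply Rabs_def1; lra. }
  apply Rabs_def2 in Bu, Bw, Bln.
  assert (Beps : eps * (e / (4 * eps)) = e / 4) by (field; lra).
  assert (Bln1 : eps * (ln t' - ln t) < e / 4) by (rewrite <- Beps; apply Rmult_lt_compat_l; lra).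
  assert (Bln2 : - (e / 4) < eps * (ln t' - ln t)) by (rewrite <- Beps; nra).
  assert (Hid : 0 < / del) by (apply Rinv_0_lt_compat; lra).
  assert (Bt : Rabs (/ del * (t' - t)) <= / del * d).
  { rewrite Rabs_mult, Rabs_pos_eq by lra. apply Rmult_le_compat_l; [lra |]. apply Rabs_le; lra. }
  assert (Bx : Rabs (bet * (2 * (x' - x) + (t' - t))) <= 3 * bet * d).
  { rewrite Rabs_mult, Rabs_pos_eq by lra.
    replace (3 * bet * d) with (bet * (3 * d)) by ring.
    apply Rmult_le_compat_l; [lra |]. apply Rabs_le; lra. }
  apply Rabs_le_between in Bt, Bx.
  unfold doubling, L in *. unfold Rdiv in *. apply Rabs_def1; nra.
Qed.

Lemma doubling_has_max_regime K j :
  (forall j x t, a <= x -> 0 < t -> u j x - w j (x + t) <= K) -> eps * (2 * del) <= 1 ->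
  exists x t, (a <= x /\ 0 < t) /\
    forall x' t', a <= x' /\ 0 < t' -> doubling j x' t' <= doubling j x t.
Proof.
  intros HK Hed.
  set (Ref := doubling j a 1).
  assert (Hbox : forall x t, a <= x -> 0 < t -> Ref <= doubling j x t ->
            x <= a + (K - Ref) / (2 * bet) /\ exp (- (K - Ref) / eps) <= t <= 2 * del * (K - Ref)).
  { intros x t Hx Ht Hlev.
    exact (doubling_superlevel_in_box K (K - Ref) HK Hed j x t Hx Ht ltac:(lra)). }
  destruct (Hbox a 1 (Rle_refl a) Rlt_0_1 (Rle_refl _)) as [HX [Heta HT]].
  assert (Hexp : 0 < exp (- (K - Ref) / eps)) by apply exp_pos.
  destruct (continuous_argmax_rectangle (doubling j) a (a + (K - Ref) / (2 * bet))
              (exp (- (K - Ref) / eps)) (2 * del * (K - Ref)) HX ltac:(lra))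
    as [xm [tm [Hxm [Htm Hmax]]]].
  { intros x t Hx Ht e He.
    destruct (doubling_continuous j x t ltac:(lra) ltac:(lra) e He) as [d [Hd Hcont]].
    exists d. split; [exact Hd |]. intros x' t' Hx' Ht'. apply Hcont; lra. }
  exists xm, tm. split; [lra |]. intros x' t' [Hx' Ht'].
  destruct (Rle_lt_dec Ref (doubling j x' t')) as [Hge | Hlt].
  - destruct (Hbox x' t' Hx' Ht' Hge). apply Hmax; lra.
  - specialize (Hmax a 1 ltac:(lra) ltac:(lra)). fold Ref in Hmax. lra.
Qed.

Lemma doubling_has_max :
  bounded_on a u -> bounded_on a w -> eps * (2 * del) <= 1 ->
  exists jb xb tb, (a <= xb /\ 0 < tb) /\
    forall j x t, a <= x /\ 0 < t -> doubling j x t <= doubling jb xb tb.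
Proof.
  intros [Mu HMu] [Mw HMw] Hed.
  apply argmax_bool. intro j.
  apply doubling_has_max_regime with (K := Mu + Mw); [| exact Hed].
  intros j' x t Hx Ht.
  generalize (HMu j' x Hx) (HMw j' (x + t) ltac:(lra)). intros Hu Hw.
  apply Rabs_le_between in Hu, Hw. lra.
Qed.

End Maximum.

Section AtMaximum.

Variables (jb : bool) (xb tb : R).
Hypotheses (Hxb : a <= xb) (Htb : 0 < tb).

Lemma doubling_max_touch_sub :
  (forall x t, a <= x /\ 0 < t -> doubling jb x t <= doubling jb xb tb) ->
  loc_max_rel a (fun x => u jb x - parabola (eps / tb - / del + bet) (2 * eps / (tb * tb)) xb x) xb.
Proof.
  intro Hmax. exists (tb / 2). split; [lra |]. intros x Hx Hdist.
  apply Rabs_lt_between' in Hdist.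
  specialize (Hmax x (xb + tb - x) ltac:(lra)).
  generalize (ln_shift_ge tb (xb - x) Htb ltac:(lra)). intro Hln.
  replace (tb + (xb - x)) with (xb + tb - x) in Hln by ring.
  assert (Heln : eps * ((xb - x) / tb - 2 * ((xb - x) * (xb - x)) / (tb * tb))
                 <= eps * (ln (xb + tb - x) - ln tb)) by (apply Rmult_le_compat_l; lra).
  replace (eps * ((xb - x) / tb - 2 * ((xb - x) * (xb - x)) / (tb * tb)))
    with (eps / tb * (xb - x) - 2 * eps / (tb * tb) * ((x - xb) * (x - xb))) in Heln
    by (field; lra).
  unfold doubling, parabola in *.
  replace (x + (xb + tb - x)) with (xb + tb) in Hmax by ring.
  unfold Rdiv in *. lra.
Qed.

Lemma doubling_max_touch_super :
  (forall x t, a <= x /\ 0 < t -> doubling jb x t <= doubling jb xb tb) ->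
  loc_min_rel a
    (fun y => w jb y - parabola (eps / tb - / del - bet) (- (2 * eps / (tb * tb))) (xb + tb) y)
    (xb + tb).
Proof.
  intro Hmax. exists (tb / 2). split; [lra |]. intros y Hy Hdist.
  apply Rabs_lt_between' in Hdist.
  specialize (Hmax xb (y - xb) ltac:(lra)).
  generalize (ln_shift_ge tb (y - (xb + tb)) Htb ltac:(lra)). intro Hln.
  replace (tb + (y - (xb + tb))) with (y - xb) in Hln by ring.
  assert (Heln : eps * ((y - (xb + tb)) / tb - 2 * ((y - (xb + tb)) * (y - (xb + tb))) / (tb * tb))
                 <= eps * (ln (y - xb) - ln tb)) by (apply Rmult_le_compat_l; lra).
  replace (eps * ((y - (xb + tb)) / tb - 2 * ((y - (xb + tb)) * (y - (xb + tb))) / (tb * tb)))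
    with (eps / tb * (y - (xb + tb)) - 2 * eps / (tb * tb) * ((y - (xb + tb)) * (y - (xb + tb))))
    in Heln by (field; lra).
  unfold doubling, parabola in *.
  replace (xb + (y - xb)) with y in Hmax by ring.
  unfold Rdiv in *. lra.
Qed.

Lemma doubling_max_viscosity rho r gamma y1 y2 l1 l2 :
  0 <= l1 -> 0 <= l2 ->
  visc_sub rho r gamma y1 y2 l1 l2 a (fun x => a <= x) u ->
  visc_super rho r gamma y1 y2 l1 l2 a (fun x => a < x) w ->
  (forall j x t, a <= x /\ 0 < t -> doubling j x t <= doubling jb xb tb) ->
  rho * (u jb xb - w jb (xb + tb)) <=
    (r * xb + ysel y1 y2 jb) * (eps / tb - / del + bet)
    - (r * (xb + tb) + ysel y1 y2 jb) * (eps / tb - / del - bet).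
Proof.
  intros Hl1 Hl2 [_ Hsub] [_ Hsup] Hmax.
  set (p := eps / tb - / del + bet). set (q := eps / tb - / del - bet).
  set (K := 2 * eps / (tb * tb)).
  generalize (Hsub (parabola p K xb) jb xb (smooth_parabola _ _ _) Hxb
                (doubling_max_touch_sub (Hmax jb))).
  generalize (Hsup (parabola q (- K) (xb + tb)) jb (xb + tb) (smooth_parabola _ _ _) ltac:(lra)
                (doubling_max_touch_super (Hmax jb))).
  rewrite !Derive_parabola_at. intros Hw Hu.
  generalize (Ham_sub_super r gamma xb (xb + tb) (ysel y1 y2 jb) p q _ _ _ _
                ltac:(unfold p, q; lra) Hu Hw).
  generalize (Hmax (negb jb) xb tb ltac:(lra)). unfold doubling. intro Hcoupling.
  assert (Hl : 0 <= lsel l1 l2 jb) by (destruct jb; assumption).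
  assert (lsel l1 l2 jb * ((u (negb jb) xb - w (negb jb) (xb + tb))
                            - (u jb xb - w jb (xb + tb))) <= 0)
    by (apply Rmult_le_0_l; lra).
  lra.
Qed.

Lemma doubling_max_value_le rho r y :
  0 < rho -> eps * (rho * del) <= rho - r ->
  rho * (u jb xb - w jb (xb + tb)) <=
    (r * xb + y) * (eps / tb - / del + bet) - (r * (xb + tb) + y) * (eps / tb - / del - bet) ->
  rho * doubling jb xb tb <= - (r * eps) + 2 * bet * (r * a + y).
Proof.
  intros Hrho Hepsr Hvisc.
  replace ((r * xb + y) * (eps / tb - / del + bet) - (r * (xb + tb) + y) * (eps / tb - / del - bet))
    with (- (r * eps) + r * tb / del + bet * (2 * (r * xb + y) + r * tb)) in Hvisc by (field; lra).
  assert (Hlog : rho * (eps * ln tb) <= (rho - r) * tb / del).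
  { apply Rle_trans with (rho * eps * tb).
    - generalize (ln_le_sub_1 tb Htb). intro. assert (0 < rho * eps) by nra. nra.
    - apply Rmult_le_reg_r with del; [lra |].
      replace ((rho - r) * tb / del * del) with ((rho - r) * tb) by (field; lra). nra. }
  assert (Hdrift : bet * ((r - rho) * (2 * xb + tb)) <= bet * ((r - rho) * (2 * a))).
  { apply Rmult_le_compat_l; [lra |].
    assert (0 < eps * (rho * del)) by (apply Rmult_lt_0_compat; nra).
    nra. }
  unfold doubling. unfold Rdiv in *. nra.
Qed.

End AtMaximum.
End Doubling.

Lemma visc_doubling_ub rho r gamma y1 y2 l1 l2 a (u w : bool -> R -> R) eps del bet :
  0 < rho -> 0 <= l1 -> 0 <= l2 -> 0 < eps -> 0 < del -> 0 < bet ->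
  eps * (rho * del) <= rho - r -> eps * (2 * del) <= 1 ->
  bounded_on a u -> (forall j, cont_on a (u j)) ->
  visc_sub rho r gamma y1 y2 l1 l2 a (fun x => a <= x) u ->
  bounded_on a w -> (forall j, cont_on a (w j)) ->
  visc_super rho r gamma y1 y2 l1 l2 a (fun x => a < x) w ->
  forall j x t, a <= x -> 0 < t ->
  rho * doubling u w a eps del bet j x t <= - (r * eps) + 2 * bet * (r * a + Rmax y1 y2).
Proof.
  intros Hrho Hl1 Hl2 Heps Hdel Hbet Hepsr Hepsd Hbu Hcu Hsub Hbw Hcw Hsup j x t Hx Ht.
  destruct (doubling_has_max u w a eps del bet Heps Hdel Hbet Hcu Hcw Hbu Hbw Hepsd)
    as [jb [xb [tb [[Hxb Htb] Hmax]]]].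
  generalize (doubling_max_value_le u w a eps del bet Heps Hdel Hbet jb xb tb Hxb Htb
                rho r (ysel y1 y2 jb) Hrho Hepsr
                (doubling_max_viscosity u w a eps del bet Heps Hbet jb xb tb Hxb Htb
                   rho r gamma y1 y2 l1 l2 Hl1 Hl2 Hsub Hsup Hmax)).
  assert (Hy : ysel y1 y2 jb <= Rmax y1 y2) by (destruct jb; [apply Rmax_l | apply Rmax_r]).
  assert (Hle : rho * doubling u w a eps del bet j x t <= rho * doubling u w a eps del bet jb xb tb)
    by (apply Rmult_le_compat_l; [lra | apply Hmax; lra]).
  nra.
Qed.

Lemma visc_sub_le_super rho r gamma y1 y2 l1 l2 a (u w : bool -> R -> R) :
  0 < rho -> r < rho -> 0 <= l1 -> 0 <= l2 ->
  bounded_on a u -> (forall j, cont_on a (u j)) ->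
  visc_sub rho r gamma y1 y2 l1 l2 a (fun x => a <= x) u ->
  bounded_on a w -> (forall j, cont_on a (w j)) ->
  visc_super rho r gamma y1 y2 l1 l2 a (fun x => a < x) w ->
  forall j x, a <= x -> u j x <= w j x.
Proof.
  intros Hrho Hr Hl1 Hl2 Hbu Hcu Hsub Hbw Hcw Hsup j0 x0 Hx0.
  apply Rnot_lt_le. intro Hlt.
  set (m := u j0 x0 - w j0 x0). assert (Hm : 0 < m) by (unfold m; lra).
  destruct (Hcw j0 x0 Hx0 (m / 4)) as [d0 [Hd0 Hw0]]; [lra |].
  set (tau := d0 / 2). assert (Htau : 0 < tau) by (unfold tau; lra).
  assert (Hwtau : w j0 (x0 + tau) < w j0 x0 + m / 4).
  { assert (Hdist : Rabs (x0 + tau - x0) < d0)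
      by (replace (x0 + tau - x0) with tau by ring; rewrite Rabs_pos_eq; unfold tau; lra).
    generalize (Rabs_def2 _ _ (Hw0 (x0 + tau) ltac:(lra) Hdist)). lra. }
  set (del := 8 * tau / m). assert (Hdel : 0 < del) by (unfold del; apply Rdiv_lt_0_compat; lra).
  assert (Hgap : 0 < rho - r) by lra. assert (Hrm : 0 < rho * m) by nra.
  destruct (at_right_0_exists_pos _
    (filter_and _ _ (at_right_0_mul_le (rho * del) (rho - r) Hgap)
    (filter_and _ _ (at_right_0_mul_le (2 * del) 1 Rlt_0_1)
    (filter_and _ _ (at_right_0_mul_le (8 * Rabs (ln tau)) m Hm)
                    (at_right_0_mul_le (8 * Rabs r) (rho * m) Hrm)))))
    as [eps [Heps [Hepsr [Hepsd [Hepsln Hepsabs]]]]].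
  destruct (at_right_0_exists_pos _
    (filter_and _ _ (at_right_0_mul_le (8 * (2 * (x0 - a) + tau)) m Hm)
                    (at_right_0_mul_le (16 * (r * a + Rmax y1 y2)) (rho * m) Hrm)))
    as [bet [Hbet [Hbetx Hbety]]].
  generalize (visc_doubling_ub rho r gamma y1 y2 l1 l2 a u w eps del bet Hrho Hl1 Hl2
                Heps Hdel Hbet Hepsr Hepsd Hbu Hcu Hsub Hbw Hcw Hsup j0 x0 tau Hx0 Htau).
  assert (Hlow : 3 * m / 8 <= doubling u w a eps del bet j0 x0 tau).
  { assert (Hln : - (m / 8) <= eps * ln tau).
    { generalize (Rabs_pos (ln tau)) (Rle_abs (- ln tau)). rewrite Rabs_Ropp. intros. nra. }
    assert (Htd : tau / del = m / 8) by (unfold del; field; lra).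
    unfold doubling, m in *. nra. }
  assert (Hreps : - (r * eps) <= rho * m / 8).
  { generalize (Rle_abs (- r)). rewrite Rabs_Ropp. intro. nra. }
  nra.
Qed.

Theorem mainTheorem5 (rho r y1 y2 gamma xl l1 l2 : R)
  (Hrho : 0 < rho) (Hr : r < rho) (Hy1 : 0 < y1) (Hy12 : y1 < y2)
  (Hgamma : 1 < gamma) (Hxl : xl <= 0)
  (Hxy1 : 0 < rho * xl + y1) (Hxy2 : 0 < rho * xl + y2)
  (Hl1 : 0 <= l1) (Hl2 : 0 <= l2)
  (v w : bool -> R -> R) :
  bounded_on xl v -> constrained_visc_sol rho r gamma y1 y2 l1 l2 xl v ->
  bounded_on xl w -> constrained_visc_sol rho r gamma y1 y2 l1 l2 xl w ->
  forall j x, xl <= x -> v j x = w j x.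
Proof.
  intros Hbv [Hcv [Hsupv Hsubv]] Hbw [Hcw [Hsupw Hsubw]] j x Hx.
  apply Rle_antisym.
  - exact (visc_sub_le_super rho r gamma y1 y2 l1 l2 xl v w Hrho Hr Hl1 Hl2
             Hbv Hcv Hsubv Hbw Hcw Hsupw j x Hx).
  - exact (visc_sub_le_super rho r gamma y1 y2 l1 l2 xl w v Hrho Hr Hl1 Hl2
             Hbw Hcw Hsubw Hbv Hcv Hsupv j x Hx).
Qed.
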